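(* Let $n\ge 3$. Consider the board with two bounded cells formed by a cycle graph $C_n$ embedded in the plane together with one additional vertex $a$ inside the cycle that is joined by edges to exactly two adjacent vertices $b$ and $c$ of the cycle (and to no other vertices); the cells are the triangle $abc$ and a cell with $n+1$ boundary edges. In the Game of Cycles on this board, if $n$ is odd then Player~1 has a winning strategy, and if $n$ is even then Player~2 has a winning strategy.
   Context: The Game of Cycles. A board is a simple connected planar graph embedded in the plane, together with its bounded cells. Two players alternate turns; on a turn a player marks one unmarked edge with an arrow pointing along the edge in one of its two directions. Each edge receives at most one arrow, and arrows have the same effect regardless of who placed them. Moves must obey the sink-source rule: no move may create a sink (a vertex all of whose incident edges are marked with arrows pointing toward it) or a source (a vertex all of whose incident edges are marked with arrows pointing away from it). A player who has a legal move must make one. A cycle cell is a bounded cell all of whose boundary edges are marked with arrows all cycling in the same direction around that cell. The first player to create a cycle cell wins; if play ends (no legal move remains) without a cycle cell, the player who made the last move wins. A winning strategy guarantees a win regardless of the opponent's moves. *)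

From mathcomp Require Import all_boot.
Set Implicit Arguments. Unset Strict Implicit. Unset Printing Implicit Defensive.

Section Board.
Variable n : nat.

(* Vertices: [Some i] is cycle vertex i (0 <= i < n), [None] is the extra vertex a.
   b is cycle vertex 0, c is cycle vertex 1 (adjacent on the cycle). *)
Definition vertex := option 'I_n.

(* Edges: [inl i] is the cycle edge {i, i+1 mod n};
          [inr true] is the edge {a, b} = {a, 0};
          [inr false] is the edge {a, c} = {a, 1}. *)
Definition edge := ('I_n + bool)%type.

(* Each edge gets a reference orientation tail -> head:
   cycle edge i : i -> (i+1 mod n);  {a,b} : a -> 0;  {a,c} : a -> 1. *)
Definition is_tail (e : edge) (v : vertex) : bool :=
  match e, v with
  | inl i, Some j => val j == val i
  | inl _, None => false
  | inr _, None => true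
  | inr _, Some _ => false
  end.

Definition is_head (e : edge) (v : vertex) : bool :=
  match e, v with
  | inl i, Some j => val j == (val i).+1 %% n
  | inl _, None => false
  | inr true, Some j => val j == 0
  | inr false, Some j => val j == 1
  | inr _, None => false
  end.

Definition incident (e : edge) (v : vertex) : bool := is_tail e v || is_head e v.

(* A position: each edge is unmarked ([None]) or carries an arrow;
   [Some true] = arrow tail -> head, [Some false] = arrow head -> tail. *)
Definition position := edge -> option bool.

Definition empty_pos : position := fun _ => None.

Definition upd (p : position) (e : edge) (d : bool) : position :=
  fun x => if x == e then Some d else p x.

Definition points_in (p : position) (e : edge) (v : vertex) : Prop :=
  (p e = Some true /\ is_head e v) \/ (p e = Some false /\ is_tail e v).

Definition points_out (p : position) (e : edge) (v : vertex) : Prop :=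
  (p e = Some true /\ is_tail e v) \/ (p e = Some false /\ is_head e v).

Definition is_sink (p : position) (v : vertex) : Prop :=
  forall e, incident e v -> points_in p e v.

Definition is_source (p : position) (v : vertex) : Prop :=
  forall e, incident e v -> points_out p e v.

Definition legal (p : position) (e : edge) (d : bool) : Prop :=
  p e = None /\
  (forall v, ~ is_sink (upd p e d) v) /\ (forall v, ~ is_source (upd p e d) v).

(* A bounded cell is given by its boundary edges together with the direction
   (w.r.t. the reference orientation) in which a fixed traversal of the
   boundary runs through each edge: [Some true] = along, [Some false] = against,
   [None] = edge not on the boundary. *)
Definition cell := edge -> option bool.

(* Triangle a b c, traversed a -> 0 -> 1 -> a. *)
Definition tri_cell : cell := fun e =>
  match e with
  | inl i => if val i == 0 then Some true else None
  | inr true => Some true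
  | inr false => Some false
  end.

(* The (n+1)-gon cell, traversed 1 -> 2 -> ... -> n-1 -> 0 -> a -> 1. *)
Definition big_cell : cell := fun e =>
  match e with
  | inl i => if val i == 0 then None else Some true
  | inr true => Some false
  | inr false => Some true
  end.

Definition cycle_cell (p : position) (C : cell) : Prop :=
  exists s : bool, forall e d, C e = Some d -> p e = Some (d == s).

Definition has_cycle_cell (p : position) : Prop :=
  cycle_cell p tri_cell \/ cycle_cell p big_cell.

(* [wins p]: the player about to move from position p has a winning strategy:
   some legal move either creates a cycle cell, or is such that every legal
   reply of the opponent creates no cycle cell and leads to a position from
   which we again win.  (If the opponent has no legal reply, the vacuous case
   means we made the last move and win.) *)
Inductive wins : position -> Prop :=
| wins_move (p : position) (e : edge) (d : bool) :
    legal p e d ->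
    (has_cycle_cell (upd p e d) \/
     forall e' d', legal (upd p e d) e' d' ->
       ~ has_cycle_cell (upd (upd p e d) e' d') /\ wins (upd (upd p e d) e' d')) ->
    wins p.

Definition player1_wins : Prop := wins empty_pos.

Definition player2_wins : Prop :=
  forall e d, legal empty_pos e d ->
    ~ has_cycle_cell (upd empty_pos e d) /\ wins (upd empty_pos e d).

End Board.

(* The board has a reflection fixing [a] and exchanging [b] and [c].  Reflecting a
   position and reversing all its arrows exchanges sinks with sources and maps cycle
   cells to cycle cells.  Hence a player who answers each move on an edge not fixed by
   the reflection with its mirror image, in a symmetric position, never makes an illegal
   move and never lets the opponent complete a cycle cell: a cell containing the
   opponent's edge also contains the still-free mirror edge.

   For odd n the only fixed edge is [bc] = [cedge 0], so Player 1 marks it and then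
   mirrors.  For even n = 2m the fixed edges are [bc] and its antipode [cedge m];
   Player 2 mirrors and answers either fixed edge with the other one.  The reflection
   exchanges the spokes [ab] and [ac], so a spoke needs a separate answer: Player 2
   either marks [bc] to leave the big cell one move from a cycle, or marks [cedge m] and
   keeps mirroring on the cycle until Player 1 touches [bc] or the other spoke, when
   Player 2 closes the triangle or restores a fully symmetric position. *)

From mathcomp Require Import all_boot zify.
From Stdlib Require Import Classical FunctionalExtensionality.
Set Implicit Arguments. Unset Strict Implicit. Unset Printing Implicit Defensive.

Lemma modn_lt_double n k : 0 < n -> k < n + n -> k %% n = if k < n then k else k - n.
Proof.
move=> n_gt0 k_lt; case: ifP => k_n; first by rewrite modn_small.
have -> : k = (k - n) + n by lia.
by rewrite modnDr modn_small; lia.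
Qed.

(* All indices handled below stay below [2 n], so every [k %% n] is [k] or [k - n]. *)
Ltac mod_lia :=
  repeat match goal with
  | x : 'I_?k |- _ => lazymatch goal with
      | _ : is_true (nat_of_ord x < k) |- _ => fail
      | _ => have := ltn_ord x; intro end end;
  repeat match goal with H : ?T |- _ =>
    lazymatch T with context [isSub.val_subdef] => progress (simpl in H) end end;
  repeat match goal with H : context [_ %% _] |- _ => revert H end;
  simpl;
  repeat match goal with
  | |- context [?k %% ?n] =>
      lazymatch k with context [_ %% _] => fail | _ =>
      rewrite (@modn_lt_double n k); [case: ifP => ? | lia | lia] end
  end;
  lia.

Section Board.
Variable n : nat.
Hypothesis n_gt2 : 2 < n.

Local Notation vertex := (vertex n).
Local Notation edge := (edge n).
Local Notation position := (position n).

Lemma n_gt0 : 0 < n. Proof. exact: ltnW (ltnW n_gt2). Qed.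

Definition ord_mod (k : nat) : 'I_n := Ordinal (ltn_pmod k n_gt0).

Lemma ord_mod_id (i : 'I_n) : ord_mod i = i.
Proof. apply: val_inj => /=; by rewrite modn_small. Qed.

Lemma ord_mod_eq (i : 'I_n) k : val i = k %% n -> i = ord_mod k.
Proof. by move=> h; apply: val_inj. Qed.

Lemma upd_same (p : position) e d : upd p e d e = Some d.
Proof. by rewrite /upd eqxx. Qed.

Lemma upd_other (p : position) e d f : f <> e -> upd p e d f = p f.
Proof. by rewrite /upd => /eqP/negbTE ->. Qed.

Lemma upd_comm (p : position) e f d c :
  e <> f -> upd (upd p e d) f c = upd (upd p f c) e d.
Proof.
move=> ef; apply: functional_extensionality => g; rewrite /upd.
by case: (eqVneq g f) => [->|//]; case: eqP => // fe; case: ef.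
Qed.

Lemma upd_marked (p : position) e d f : p f <> None -> upd p e d f <> None.
Proof. by rewrite /upd; case: eqP. Qed.

Local Notation cedge k := (inl (ord_mod k) : edge).
Local Notation ab := (inr true : edge).
Local Notation ac := (inr false : edge).

(** * The board and its reflection *)

(* The reflection fixes [a] and swaps [b = 0] with [c = 1]. *)
Definition mirror_vertex (v : vertex) : vertex :=
  if v is Some j then Some (ord_mod (n.+1 - j)) else None.

Definition mirror_edge (e : edge) : edge :=
  match e with inl i => inl (ord_mod (n - i)) | inr b => inr (~~ b) end.

(* The reflection reverses every arrow as well, so that sinks and sources are
   exchanged; relative to the reference orientations only the arrows on the
   spokes [ab], [ac] change their boolean. *)
Definition mirror_dir (e : edge) (d : bool) : bool := if e is inr _ then ~~ d else d.

Definition mirror (p : position) : position :=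
  fun e => omap (mirror_dir e) (p (mirror_edge e)).

Lemma mirror_edgeK : involutive mirror_edge.
Proof.
case=> [i|b] /=; last by rewrite negbK.
by congr inl; apply: val_inj => /=; mod_lia.
Qed.

Lemma mirror_vertexK : involutive mirror_vertex.
Proof. by case=> [j|] //=; congr Some; apply: val_inj => /=; mod_lia. Qed.

Lemma mirror_dir_edge e : mirror_dir (mirror_edge e) = mirror_dir e.
Proof. by case: e. Qed.

Lemma mirror_dirK e : involutive (mirror_dir e).
Proof. by case: e => [i|b] d; rewrite /= ?negbK. Qed.

Lemma mirror_edge_inj : injective mirror_edge.
Proof. exact: inv_inj mirror_edgeK. Qed.

Lemma mirrorK : involutive mirror.
Proof.
move=> p; apply: functional_extensionality => e.
rewrite /mirror mirror_edgeK mirror_dir_edge; case: (p e) => //= d; by rewrite mirror_dirK.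
Qed.

Lemma mirror_upd (p : position) e d :
  mirror (upd p e d) = upd (mirror p) (mirror_edge e) (mirror_dir e d).
Proof.
apply: functional_extensionality => f; rewrite /mirror /upd.
have -> : (mirror_edge f == e) = (f == mirror_edge e).
  by rewrite -(inj_eq mirror_edge_inj) mirror_edgeK.
by case: eqP => [->|//]; rewrite mirror_dir_edge.
Qed.

Lemma is_head_mirror (e : edge) (v : vertex) : is_head (mirror_edge e) (mirror_vertex v) =
  if e is inl _ then is_tail e v else is_head e v.
Proof. by case: e => [i|[]]; case: v => [j|] //=; mod_lia. Qed.

Lemma is_tail_mirror (e : edge) (v : vertex) : is_tail (mirror_edge e) (mirror_vertex v) =
  if e is inl _ then is_head e v else is_tail e v.
Proof. by case: e => [i|[]]; case: v => [j|] //=; mod_lia. Qed.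

Lemma incident_mirror (e : edge) (v : vertex) :
  incident (mirror_edge e) (mirror_vertex v) = incident e v.
Proof. by rewrite /incident is_head_mirror is_tail_mirror; case: e => // i; rewrite orbC. Qed.

Lemma edge_no_loop (e : edge) (v : vertex) : is_head e v -> is_tail e v -> False.
Proof. by case: e => [i|[]]; case: v => [j|] //=; mod_lia. Qed.

Lemma edge_of_endpoints (e f : edge) (u v : vertex) : u <> v ->
  incident e u -> incident e v -> incident f u -> incident f v -> e = f.
Proof.
rewrite /incident => uv.
have jk : forall j k : 'I_n, u = Some j -> v = Some k -> val j != val k.
  by move=> j k eu ev; apply: contra_not_neq uv => /val_inj jk; rewrite eu ev jk.
case: u v uv jk => [j|] [k|] uv jk //=; try have := jk _ _ erefl erefl;
  case: e => [i|[]]; case: f => [l|[]] //= *; try (congr inl; apply: val_inj); mod_lia.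
Qed.

Lemma ord_neq (i j : 'I_n) : val i != val j -> i <> j.
Proof. by move=> /eqP ij /(congr1 val). Qed.

Lemma cedge_neq (i j : 'I_n) : val i != val j -> inl i <> inl j :> edge.
Proof. by move=> /ord_neq ij [/ij]. Qed.

Lemma incident_cedge (i : 'I_n) (v : vertex) :
  incident (inl i) v -> v = Some i \/ v = Some (ord_mod i.+1).
Proof.
case: v => [j|] // /orP[] /eqP /= ji; [left | right]; congr Some; last exact: ord_mod_eq.
exact: val_inj.
Qed.

Lemma incident_spoke b (v : vertex) :
  incident (inr b) v -> v = None \/ v = Some (ord_mod (if b then 0 else 1)).
Proof.
case: v => [j|] /=; last by left.
by rewrite /incident; case: b => /= /eqP ji; right; congr Some; apply: ord_mod_eq; mod_lia.
Qed.

Lemma incident_a (f : edge) : incident f None -> f = ab \/ f = ac.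
Proof. by case: f => [i|[]]; auto. Qed.

Lemma incident_0 (f : edge) : incident f (Some (ord_mod 0)) ->
  [\/ f = cedge 0, f = cedge n.-1 | f = ab].
Proof.
rewrite /incident; case: f => [i|[]] /= h; [ | by constructor 3 | by move: h; mod_lia].
have [] : val i = 0 %% n \/ val i = n.-1 %% n by move: h; mod_lia.
  by move=> /ord_mod_eq ->; constructor 1.
by move=> /ord_mod_eq ->; constructor 2.
Qed.

Lemma incident_ge2 (w : 'I_n) (f : edge) : 2 <= w -> incident f (Some w) ->
  f = inl w \/ f = cedge w.-1.
Proof.
move=> w_ge2; rewrite /incident; case: f => [i|[]] /= h; try by move: h; mod_lia.
have [] : val i = w %% n \/ val i = w.-1 %% n by move: h; mod_lia.
  by move=> /ord_mod_eq ->; left; rewrite ord_mod_id.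
by move=> /ord_mod_eq ->; right.
Qed.

Lemma two_incident_edges (v : vertex) : exists f g, [/\ f <> g, incident f v & incident g v].
Proof.
case: v => [j|]; last by exists ab, ac.
exists (inl j), (cedge (j + n.-1)); split.
- by move=> [/(congr1 val)] /=; mod_lia.
- by rewrite /incident /= eqxx.
- by rewrite /incident /=; apply/orP; right; mod_lia.
Qed.

(** * Sinks, sources and legal moves *)

Definition arrow_in (e : edge) (v : vertex) (x : bool) : bool :=
  if x then is_head e v else is_tail e v.

Lemma points_in_of (p : position) f v x :
  p f = Some x -> arrow_in f v x -> points_in p f v.
Proof. by rewrite /points_in /arrow_in => ->; case: x => h; [left | right]. Qed.

Lemma points_out_of (p : position) f v x :
  p f = Some x -> incident f v -> ~~ arrow_in f v x -> points_out p f v.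
Proof.
rewrite /points_out /arrow_in /incident => ->.
by case: x; case: (is_tail f v); case: (is_head f v) => //= *; [left | right].
Qed.

Lemma points_in_out (p : position) e v : points_in p e v -> points_out p e v -> False.
Proof.
rewrite /points_in /points_out.
by case=> -[pe h] [] [pe' h']; rewrite pe in pe' => //;
  [exact: edge_no_loop h h' | exact: edge_no_loop h' h].
Qed.

Lemma points_in_incident (p : position) e v : points_in p e v -> incident e v.
Proof. by rewrite /incident => -[] [_ ->]; rewrite ?orbT. Qed.

Lemma points_out_incident (p : position) e v : points_out p e v -> incident e v.
Proof. by rewrite /incident => -[] [_ ->]; rewrite ?orbT. Qed.

Definition no_sink_source (p : position) := forall v, ~ is_sink p v /\ ~ is_source p v.

Lemma sink_source_local (p q : position) v : (forall f, incident f v -> p f = q f) ->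
  (is_sink p v <-> is_sink q v) /\ (is_source p v <-> is_source q v).
Proof.
move=> pq; rewrite /is_sink /is_source /points_in /points_out.
by split; split=> H f hf; move: (H f hf); rewrite (pq f hf).
Qed.

Definition safe (p : position) v :=
  (exists2 e, incident e v & p e = None) \/
  ((exists e, points_in p e v) /\ (exists e, points_out p e v)).

Lemma safe_no_sink_source (p : position) v : safe p v -> ~ is_sink p v /\ ~ is_source p v.
Proof.
case=> [[e he pe]|[[e1 h1] [e2 h2]]]; split=> H.
- by case: (H e he) => -[]; rewrite pe.
- by case: (H e he) => -[]; rewrite pe.
- exact: points_in_out (H e2 (points_out_incident h2)) h2.
- exact: points_in_out h1 (H e1 (points_in_incident h1)).
Qed.

Definition free_or (o : option bool) (x : bool) := o = None \/ o = Some x.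

Lemma safe_opposite (p : position) v f g x y : incident f v -> incident g v ->
  free_or (p f) x -> free_or (p g) y -> arrow_in f v x != arrow_in g v y -> safe p v.
Proof.
move=> hf hg [pf|pf]; first by left; exists f.
case=> [pg|pg]; first by left; exists g.
case Ef: (arrow_in f v x) => /= Eg; right.
- split; [exists f; exact: points_in_of pf Ef | exists g; exact: points_out_of pg hg Eg].
- split; [exists g; exact: points_in_of pg (negbNE Eg) | exists f; apply: points_out_of pf hf _].
  by rewrite Ef.
Qed.

Lemma no_sink_source_aligned (p : position) v c : no_sink_source p ->
  (forall h, incident h v -> exists2 x, p h = Some x & arrow_in h v x = c) -> False.
Proof.
move=> /(_ v) [no_sink no_source] H; case: c H => H.
- by apply: no_sink => h hh; have [x px dx] := H h hh; exact: points_in_of px dx.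
- apply: no_source => h hh; have [x px dx] := H h hh.
  by apply: points_out_of px hh _; rewrite dx.
Qed.

Lemma legal_no_sink_source (p : position) e d : legal p e d -> no_sink_source (upd p e d).
Proof. by case=> _ [h1 h2] v. Qed.

Lemma legal_of (p : position) e d :
  p e = None -> no_sink_source (upd p e d) -> legal p e d.
Proof. by move=> pe ns; split=> //; split=> v; case: (ns v). Qed.

Lemma legal_local (p : position) e d : p e = None -> no_sink_source p ->
  (forall v, incident e v -> ~ is_sink (upd p e d) v /\ ~ is_source (upd p e d) v) ->
  legal p e d.
Proof.
move=> pe ns H; apply: legal_of => // v.
case: (boolP (incident e v)) => hv; first exact: H.
have [[sink_p _] [source_p _]] : (is_sink (upd p e d) v <-> is_sink p v) /\
    (is_source (upd p e d) v <-> is_source p v).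
  by apply: sink_source_local => f hf; apply: upd_other => fe; rewrite -fe hf in hv.
by case: (ns v) => ns1 ns2; split=> [/sink_p|/source_p].
Qed.

Lemma legal_safe (p : position) e d : p e = None -> no_sink_source p ->
  (forall v, incident e v -> safe (upd p e d) v) -> legal p e d.
Proof. by move=> pe ns H; apply: legal_local => // v /H /safe_no_sink_source. Qed.

Lemma upd_mirror (p : position) e d :
  upd (mirror p) e d = mirror (upd p (mirror_edge e) (mirror_dir e d)).
Proof. by rewrite mirror_upd mirror_edgeK mirror_dir_edge mirror_dirK. Qed.

Lemma points_in_mirror (p : position) e v :
  points_in (mirror p) e v <-> points_out p (mirror_edge e) (mirror_vertex v).
Proof.
rewrite /points_in /points_out /mirror is_head_mirror is_tail_mirror.
by case: e => [i|b] /=; case: (p _) => [[]|] /=; intuition congruence.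
Qed.

Lemma is_sink_mirror (p : position) v : is_sink (mirror p) v <-> is_source p (mirror_vertex v).
Proof.
split=> H f hf.
- rewrite -(mirror_edgeK f) incident_mirror in hf.
  by have /points_in_mirror := H _ hf; rewrite mirror_edgeK.
- by apply/points_in_mirror; apply: H; rewrite incident_mirror.
Qed.

Lemma is_source_mirror (p : position) v : is_source (mirror p) v <-> is_sink p (mirror_vertex v).
Proof.
have := is_sink_mirror (mirror p) (mirror_vertex v).
by rewrite mirrorK mirror_vertexK => -[h1 h2]; split.
Qed.

Lemma legal_mirror (p : position) e d :
  legal p e d -> legal (mirror p) (mirror_edge e) (mirror_dir e d).
Proof.
move=> hl; apply: legal_of; first by rewrite /mirror mirror_edgeK (proj1 hl).
rewrite -mirror_upd => v; have [ns1 ns2] := legal_no_sink_source hl (mirror_vertex v).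
by split=> [/is_sink_mirror | /is_source_mirror].
Qed.

Lemma cycle_cell_mirror (p : position) (C : cell n) :
  (forall e, C (mirror_edge e) = omap (mirror_dir e) (C e)) ->
  cycle_cell p C -> cycle_cell (mirror p) C.
Proof.
move=> C_mirror [s H]; exists s => e d Ce.
rewrite /mirror (H (mirror_edge e) (mirror_dir e d)); last by rewrite C_mirror Ce.
by case: e {Ce} => //= _; case: (d); case: (s).
Qed.

Lemma tri_cell_mirror e : tri_cell (mirror_edge e) = omap (mirror_dir e) (@tri_cell n e).
Proof.
case: e => [i|[]] //=; have -> : ((n - i) %% n == 0) = (val i == 0).
  by apply/eqP/eqP; mod_lia.
by case: eqP.
Qed.

Lemma big_cell_mirror e : big_cell (mirror_edge e) = omap (mirror_dir e) (@big_cell n e).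
Proof.
case: e => [i|[]] //=; have -> : ((n - i) %% n == 0) = (val i == 0).
  by apply/eqP/eqP; mod_lia.
by case: eqP.
Qed.

Lemma has_cycle_cell_mirror (p : position) : has_cycle_cell p -> has_cycle_cell (mirror p).
Proof.
case=> C; [left; exact: cycle_cell_mirror tri_cell_mirror C | right].
exact: cycle_cell_mirror big_cell_mirror C.
Qed.

Lemma has_cycle_cell_mirrorE (p : position) : has_cycle_cell (mirror p) <-> has_cycle_cell p.
Proof. by split=> [/has_cycle_cell_mirror|/has_cycle_cell_mirror //]; rewrite mirrorK. Qed.

Lemma wins_mirror : forall p : position, wins p -> wins (mirror p).
Proof.
fix IH 2 => _ [p e d hl H]; apply: wins_move (legal_mirror hl) _.
rewrite -mirror_upd; case: H => [cyc|replies]; [left; exact: has_cycle_cell_mirror | right].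
move=> e' d' /legal_mirror; rewrite mirrorK => /replies [nc w].
by rewrite upd_mirror has_cycle_cell_mirrorE; split=> //; exact: IH _ w.
Qed.

Definition losing (p : position) :=
  forall e d, legal p e d -> ~ has_cycle_cell (upd p e d) /\ wins (upd p e d).

Lemma tri_cycleP (p : position) : cycle_cell p (@tri_cell n) <->
  exists s, [/\ p (cedge 0) = Some s, p ab = Some s & p ac = Some (~~ s)].
Proof.
split=> [[s H]|[s [h0 hb hc]]].
- exists s; split; [have := H (cedge 0) true | have := H ab true | have := H ac false].
  + by rewrite /= mod0n => ->//; case: s {H}.
  + by move=> ->//; case: s {H}.
  + by move=> ->//; case: s {H}.
- exists s => -[i|[]] d /=.
  + case: eqP => // i0 [<-]; have -> : i = ord_mod 0 by apply: ord_mod_eq; rewrite mod0n.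
    by rewrite h0; case: s {h0 hb hc}.
  + by case=> <-; rewrite hb; case: s {h0 hb hc}.
  + by case=> <-; rewrite hc; case: s {h0 hb hc}.
Qed.

Lemma big_cycleP (p : position) : cycle_cell p (@big_cell n) <->
  exists s, [/\ forall i : 'I_n, val i != 0 -> p (inl i) = Some s,
                 p ab = Some (~~ s) & p ac = Some s].
Proof.
split=> [[s H]|[s [hi hb hc]]].
- exists s; split; [move=> i i0; have := H (inl i) true | have := H ab false | have := H ac true].
  + by rewrite /= (negbTE i0) => ->//; case: s {H}.
  + by move=> ->//; case: s {H}.
  + by move=> ->//; case: s {H}.
- exists s => -[i|[]] d /=.
  + by case: ifP => // /negbT i0 [<-]; rewrite hi //; case: s {hi hb hc}.
  + by case=> <-; rewrite hb; case: s {hi hb hc}.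
  + by case=> <-; rewrite hc; case: s {hi hb hc}.
Qed.

Lemma no_cycle_free_spoke (p : position) : p ab = None \/ p ac = None -> ~ has_cycle_cell p.
Proof.
by move=> H [/tri_cycleP [s [_ h1 h2]]|/big_cycleP [s [_ h1 h2]]]; case: H; congruence.
Qed.

Definition free_edges (p : position) := #|[pred e | p e == None]|.

Lemma free_edges_upd (p : position) e d : p e = None -> free_edges (upd p e d) < free_edges p.
Proof.
move=> pe; apply: proper_card; apply/properP; split.
  by apply/subsetP => x; rewrite !inE /upd; case: (x == e).
by exists e; rewrite !inE ?pe ?upd_same.
Qed.

Lemma wins_by_move (p : position) e d : legal p e d ->
  (~ has_cycle_cell (upd p e d) -> losing (upd p e d)) -> wins p.
Proof.
move=> hl H; apply: (wins_move hl).
by case: (classic (has_cycle_cell (upd p e d))) => h; [left | right => e' d' /(H h)].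
Qed.

(** * The mirror strategy *)

Lemma mirror_reply_no_sink_source_at (p : position) e d v :
  let q := upd p e d in let r := upd q (mirror_edge e) (mirror_dir e d) in
  no_sink_source q -> mirror_edge e <> e ->
  (forall f, incident f v -> mirror r f = r f) -> ~ is_sink r v /\ ~ is_source r v.
Proof.
move=> q r ns e_moved agree.
have at_reply w : is_sink r w \/ is_source r w -> incident (mirror_edge e) w.
  apply: contraPT => /negP not_at.
  have [[sink_rq _] [source_rq _]] :
      (is_sink r w <-> is_sink q w) /\ (is_source r w <-> is_source q w).
    by apply: sink_source_local => f hf; apply: upd_other => fe; rewrite -fe hf in not_at.
  by case: (ns w) => ns1 ns2 [/sink_rq|/source_rq].
have [[_ sink_v] [_ source_v]] := sink_source_local agree.
(* a sink at [w] and the reflected source both lie on [e] and on its mirror *)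
have conflict w : is_sink r w -> is_source r (mirror_vertex w) -> False.
  move=> sink src; have hw := at_reply w (or_introl sink).
  have hw' := at_reply _ (or_intror src).
  have ew : incident e w by rewrite -incident_mirror.
  have ew' : incident e (mirror_vertex w) by rewrite -incident_mirror mirror_vertexK.
  case: (eqVneq w (mirror_vertex w)) => [E|neq].
    by rewrite -E in src; exact: points_in_out (sink _ hw) (src _ hw).
  by apply: e_moved; symmetry; exact: edge_of_endpoints (elimN eqP neq) ew ew' hw hw'.
split=> [sink|source].
- exact: conflict sink ((is_sink_mirror r v).1 (sink_v sink)).
- apply: conflict ((is_source_mirror r v).1 (source_v source)) _.
  by rewrite mirror_vertexK.
Qed.

Lemma cycle_cell_upd_mirror_sym (p : position) (C : cell n) e d :
  (forall f, C (mirror_edge f) = omap (mirror_dir f) (C f)) ->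
  mirror p = p -> p e = None -> mirror_edge e <> e ->
  cycle_cell (upd p e d) C -> cycle_cell p C.
Proof.
move=> C_mirror p_sym pe e_moved [s H]; case Ce: (C e) => [c|].
  have /H : C (mirror_edge e) = Some (mirror_dir e c) by rewrite C_mirror Ce.
  by rewrite upd_other // -p_sym /mirror mirror_edgeK pe.
by exists s => f c Cf; rewrite -(H f c Cf) upd_other // => fe; rewrite fe Ce in Cf.
Qed.

Lemma upd_no_cycle_mirror_sym (p : position) e d :
  mirror p = p -> p e = None -> mirror_edge e <> e ->
  ~ has_cycle_cell p -> ~ has_cycle_cell (upd p e d).
Proof.
move=> p_sym pe e_moved nc [] /(cycle_cell_upd_mirror_sym _ p_sym pe e_moved) H; apply: nc.
- by left; exact: H tri_cell_mirror.
- by right; exact: H big_cell_mirror.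
Qed.

Lemma mirror_reply_sym_at (p : position) e d f : mirror_edge e <> e -> mirror p f = p f ->
  let r := upd (upd p e d) (mirror_edge e) (mirror_dir e d) in mirror r f = r f.
Proof.
move=> e_moved pf r; rewrite /r mirror_upd mirror_edgeK mirror_dir_edge mirror_dirK mirror_upd.
by rewrite upd_comm // /upd; case: eqP => // _; case: eqP.
Qed.

Lemma mirror_reply (p : position) e d :
  mirror p = p -> legal p e d -> mirror_edge e <> e ->
  let r := upd (upd p e d) (mirror_edge e) (mirror_dir e d) in
  legal (upd p e d) (mirror_edge e) (mirror_dir e d) /\ mirror r = r.
Proof.
move=> p_sym hl e_moved r.
have r_sym f : mirror r f = r f by apply: mirror_reply_sym_at; rewrite ?p_sym.
split; last exact: functional_extensionality r_sym.
apply: legal_of; first by rewrite upd_other // -p_sym /mirror mirror_edgeK (proj1 hl).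
by move=> v; apply: mirror_reply_no_sink_source_at (legal_no_sink_source hl) e_moved _ => f _.
Qed.

Definition mirror_state (p : position) :=
  [/\ mirror p = p, forall f, mirror_edge f = f -> p f <> None & ~ has_cycle_cell p].

Lemma mirror_state_losing (p : position) : mirror_state p -> losing p.
Proof.
have [k] := ubnP (free_edges p); elim: k p => // k IH p lt_pk [p_sym fixed nc] e d hl.
have e_moved : mirror_edge e <> e by move=> fixed_e; exact: fixed e fixed_e (proj1 hl).
split; first exact: upd_no_cycle_mirror_sym (proj1 hl) e_moved nc.
have [hl' r_sym] := mirror_reply p_sym hl e_moved.
apply: (wins_by_move hl') => nc_r; apply: IH; last by split=> // f /fixed /upd_marked/upd_marked.
have := free_edges_upd d (proj1 hl); have := free_edges_upd (mirror_dir e d) (proj1 hl').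
lia.
Qed.

(** * Odd boards *)

Lemma mirror_empty : mirror (@empty_pos n) = @empty_pos n.
Proof. by apply: functional_extensionality. Qed.

Lemma empty_legal e d : legal (@empty_pos n) e d.
Proof.
apply: legal_safe => // v; have [f [g [fg hf hg]]] := two_incident_edges v.
  by apply: safe_no_sink_source; left; exists f.
move=> _; left; case: (eqVneq f e) => [fe|/eqP fe]; last by exists f; rewrite ?upd_other.
by exists g; rewrite ?upd_other // => ge; apply: fg; rewrite fe ge.
Qed.

Lemma mirror_cedge0 : mirror_edge (cedge 0) = cedge 0.
Proof. by congr inl; apply: val_inj => /=; mod_lia. Qed.

Lemma mirror_fixed_odd f : odd n -> mirror_edge f = f -> f = cedge 0.
Proof.
move=> n_odd; case: f => [i|[]] //= [/(congr1 val)] /= h.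
have := odd_double_half n; rewrite n_odd -muln2 => h2.
by congr inl; apply: val_inj => /=; move: h h2; mod_lia.
Qed.

Theorem odd_player1_wins : odd n -> player1_wins n.
Proof.
move=> n_odd; apply: (wins_by_move (empty_legal (cedge 0) true)) => _.
apply: mirror_state_losing; split.
- by rewrite mirror_upd mirror_empty mirror_cedge0.
- by move=> f /(mirror_fixed_odd n_odd) ->; rewrite upd_same.
- exact: no_cycle_free_spoke (or_introl _).
Qed.

(** * Flows around the big cell *)

Definition big_flow (p : position) s :=
  [/\ forall i : 'I_n, val i != 0 -> free_or (p (inl i)) (~~ s),
      free_or (p ab) s & free_or (p ac) (~~ s)].

Lemma big_flow_no_sink_source (p : position) s : big_flow p s -> no_sink_source p.
Proof.
move=> [hcyc hab hac] v; apply: safe_no_sink_source.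
case: v => [j|]; last first.
  by apply: safe_opposite hab hac _ => //; case: (s).
case: (ltnP 1 j) => j_ge2.
  apply: (@safe_opposite _ _ (inl j) (cedge j.-1) (~~ s) (~~ s)); rewrite /incident /=.
  - by rewrite eqxx.
  - by apply/orP; right; mod_lia.
  - by apply: hcyc; mod_lia.
  - by apply: hcyc; mod_lia.
  - by case: (s) => /=; mod_lia.
have [->|->] : j = ord_mod 0 \/ j = ord_mod 1.
  by case: (ltnP j 1) => j1; [left | right]; apply: ord_mod_eq; mod_lia.
- apply: (@safe_opposite _ _ ab (cedge n.-1) s (~~ s)); rewrite /incident /= ?hab //.
  + by mod_lia.
  + by mod_lia.
  + by apply: hcyc; mod_lia.
  + by case: (s) => /=; mod_lia.
- apply: (@safe_opposite _ _ ac (cedge 1) (~~ s) (~~ s)); rewrite /incident /= ?hac //.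
  + by mod_lia.
  + by mod_lia.
  + by apply: hcyc; mod_lia.
  + by case: (s) => /=; mod_lia.
Qed.

Lemma big_cycle_no_sink_source (p : position) : cycle_cell p (@big_cell n) -> no_sink_source p.
Proof.
case/big_cycleP=> s [hcyc hab hac]; apply: (@big_flow_no_sink_source _ (~~ s)).
by split; rewrite ?negbK; right => //; exact: hcyc.
Qed.

Lemma wins_by_big_cycle (p : position) e d :
  p e = None -> cycle_cell (upd p e d) (@big_cell n) -> wins p.
Proof.
move=> pe cyc; apply: (wins_by_move (legal_of pe (big_cycle_no_sink_source cyc))).
by case; right.
Qed.

Lemma cedge_conflict (p : position) (w : 'I_n) x : no_sink_source p -> 2 <= w ->
  p (inl w) = Some x -> p (cedge w.-1) = Some (~~ x) -> False.
Proof.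
move=> ns w_ge2 h1 h2; apply: (no_sink_source_aligned (c := ~~ x) ns).
move=> h /(incident_ge2 w_ge2) [->|->]; [exists x | exists (~~ x)] => //.
  by rewrite /arrow_in; case: x {h1 h2} => /=; mod_lia.
by rewrite /arrow_in; case: x {h1 h2} => /=; mod_lia.
Qed.

Lemma spoke_conflict (p : position) x :
  no_sink_source p -> p ab = Some x -> p ac = Some x -> False.
Proof.
move=> ns h1 h2; apply: (no_sink_source_aligned (c := ~~ x) ns).
by move=> h /incident_a [->|->]; exists x => //; case: x {h1 h2}.
Qed.

Lemma vertex0_conflict (p : position) s : no_sink_source p ->
  p (cedge 0) = Some (~~ s) -> p (cedge n.-1) = Some s -> p ab = Some s -> False.
Proof.
move=> ns h0 hn1 hab; apply: (no_sink_source_aligned (v := Some (ord_mod 0)) (c := s) ns).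
move=> h /incident_0 [] ->; [exists (~~ s) | exists s | exists s] => //.
all: by case: (s) => /=; mod_lia.
Qed.

Lemma triangle_reply_legal (p : position) s : no_sink_source p -> p (cedge 0) = None ->
  p ab = Some s -> p ac = Some (~~ s) -> legal p (cedge 0) s.
Proof.
move=> ns h0 hab hac; apply: legal_safe => // v /incident_cedge [->|->].
- apply: (@safe_opposite _ _ (cedge 0) ab s s).
  + by rewrite /incident /=; mod_lia.
  + by rewrite /incident /=; mod_lia.
  + by right; rewrite upd_same.
  + by right; rewrite upd_other.
  + by case: (s) => /=; mod_lia.
- apply: (@safe_opposite _ _ (cedge 0) ac s (~~ s)).
  + by rewrite /incident /=; mod_lia.
  + by rewrite /incident /=; mod_lia.
  + by right; rewrite upd_same.
  + by right; rewrite upd_other.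
  + by case: (s) => /=; mod_lia.
Qed.

(* Exactly one spoke is marked, in the direction of [big_flow _ s]. *)
Definition spoke_flow (p : position) s :=
  (p ab = Some s /\ p ac = None) \/ (p ab = None /\ p ac = Some (~~ s)).

Lemma spoke_move_flow (p : position) s b d : spoke_flow p s -> legal p (inr b) d ->
  upd p (inr b) d ab = Some s /\ upd p (inr b) d ac = Some (~~ s).
Proof.
move=> hs /[dup] /legal_no_sink_source ns [pe _].
case: hs => -[hab hac]; case: b pe ns => pe ns; rewrite ?hab ?hac // in pe.
- rewrite upd_same upd_other // hab; split=> //.
  case: (s) (d) hab ns => -[] hab ns //; exfalso; apply: (spoke_conflict ns);
    by rewrite ?upd_same ?upd_other ?hab.
- rewrite upd_same upd_other // hac; split=> //.
  case: (s) (d) hac ns => -[] hac ns //; exfalso; apply: (spoke_conflict ns);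
    by rewrite ?upd_same ?upd_other ?hac.
Qed.

Lemma spoke_flow_complete (p : position) s : spoke_flow p s -> exists b c,
  [/\ p (inr b) = None, upd p (inr b) c ab = Some s & upd p (inr b) c ac = Some (~~ s)].
Proof.
case=> -[hab hac]; [exists false, (~~ s) | exists true, s].
- by rewrite upd_same upd_other.
- by rewrite upd_same upd_other.
Qed.

Lemma spoke_flow_upd_cedge (p : position) s i d : spoke_flow p s -> spoke_flow (upd p (inl i) d) s.
Proof. by rewrite /spoke_flow !upd_other. Qed.

Lemma spoke_flow_no_cycle (p : position) s : spoke_flow p s -> ~ has_cycle_cell p.
Proof. by move=> hs; apply: no_cycle_free_spoke; case: hs => -[]; [right | left]. Qed.

Lemma cedge0_neq (i : 'I_n) : val i != 0 -> inl i <> cedge 0.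
Proof. by move=> i0; apply: cedge_neq; mod_lia. Qed.

(* Player 2 wins by closing the big cell: only [inl j] and one spoke are still free. *)
Definition near_state (p : position) s (j : 'I_n) :=
  [/\ p (cedge 0) = Some (~~ s), spoke_flow p s, val j != 0, p (inl j) = None
    & forall i : 'I_n, val i != 0 -> i <> j -> p (inl i) = Some (~~ s)].

Lemma near_state_cedge_move (p : position) s j i d :
  near_state p s j -> legal p (inl i) d -> i = j /\ d = ~~ s.
Proof.
move=> [h0 hs j0 hj hcyc] /[dup] /legal_no_sink_source ns [pe _].
have ij : i = j.
  case: (eqVneq i j) => // /eqP ij; move: pe; case: (eqVneq (val i) 0) => i0.
    have -> : i = ord_mod 0 by apply: ord_mod_eq; rewrite mod0n.
    by rewrite h0.
  by rewrite hcyc.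
subst i; split=> //; case: (eqVneq d (~~ s)) => // /negPf ds.
have {ds} d_s : d = s by case: (d) (s) ds => -[].
(* an arrow against the flow meets an arrow along it at a vertex of degree two *)
subst d; exfalso; case: (ltnP 1 j) => j_ge2.
  apply: (cedge_conflict ns j_ge2); first by rewrite upd_same.
  rewrite upd_other; last by apply: cedge_neq; mod_lia.
  by rewrite hcyc //; [mod_lia | apply: ord_neq; mod_lia].
apply: (@cedge_conflict _ (ord_mod 2) (~~ s) ns); first by mod_lia.
  rewrite upd_other; last by apply: cedge_neq; mod_lia.
  by rewrite hcyc //; [mod_lia | apply: ord_neq; mod_lia].
have -> : ord_mod (ord_mod 2).-1 = j by symmetry; apply: ord_mod_eq; mod_lia.
by rewrite upd_same negbK.
Qed.

Lemma near_state_losing (p : position) s j : near_state p s j -> losing p.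
Proof.
move=> /[dup] hp [h0 hs j0 hj hcyc] e d /[dup] hl [pe _].
have upd_cycle_edges (q : position) : q (inl j) = Some (~~ s) ->
    (forall i, q (inl i) = p (inl i) \/ i = j) ->
    forall i : 'I_n, val i != 0 -> q (inl i) = Some (~~ s).
  move=> qj qi i i0; case: (eqVneq i j) => [->//|/eqP ij].
  by case: (qi i) => [->|//]; exact: hcyc.
case: e hl pe => [i|b] hl pe.
- have [ij d_ns] := near_state_cedge_move hp hl; subst i d.
  split; first exact: spoke_flow_no_cycle (spoke_flow_upd_cedge _ _ hs).
  have [b [c [pb hab hac]]] := spoke_flow_complete (spoke_flow_upd_cedge j (~~ s) hs).
  apply: (wins_by_big_cycle (d := c) pb); apply/big_cycleP; exists (~~ s); rewrite negbK.
  split=> //; apply: upd_cycle_edges; first by rewrite upd_other // upd_same.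
  by move=> i; rewrite upd_other // /upd; case: eqP => [[->]|_]; [right | left].
- have [hab hac] := spoke_move_flow hs hl.
  split.
    case=> [/tri_cycleP [x [hx0 hxb _]]|/big_cycleP [x [hx _ _]]].
      by move: hx0 hxb; rewrite hab upd_other // h0 => -[<-] -[]; case: (s).
    by move: (hx j j0); rewrite upd_other // hj.
  apply: (@wins_by_big_cycle _ (inl j) (~~ s)); first by rewrite upd_other.
  apply/big_cycleP; exists (~~ s); rewrite negbK.
  split; [apply: upd_cycle_edges | by rewrite upd_other | by rewrite upd_other].
    exact: upd_same.
  by move=> i; rewrite /upd; case: eqP => [[->]|_]; [right | left].
Qed.

Lemma wins_to_near_state (p : position) s (j : 'I_n) :
  p (cedge 0) = None -> spoke_flow p s -> val j != 0 -> p (inl j) = None ->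
  (forall i : 'I_n, val i != 0 -> i <> j -> p (inl i) = Some (~~ s)) -> wins p.
Proof.
move=> h0 hs j0 hj hcyc.
have hl : legal p (cedge 0) (~~ s).
  apply: legal_of h0 _; apply: (@big_flow_no_sink_source _ s); split.
  - move=> i i0; rewrite upd_other; last by apply: cedge0_neq.
    by case: (eqVneq i j) => [->|ij]; [left | right; apply: hcyc => //; exact/eqP].
  - by case: hs => -[hab hac]; rewrite upd_other // hab; [right | left].
  - by case: hs => -[hab hac]; rewrite upd_other // hac; [left | right].
apply: (wins_by_move hl) => _; apply: (@near_state_losing _ s j); split=> //.
- exact: upd_same.
- by rewrite upd_other //; apply: cedge0_neq.
- by move=> i i0 ij; rewrite upd_other ?hcyc //; apply: cedge0_neq.
Qed.

Lemma wins_near_or_misaligned (p : position) s (j : 'I_n) :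
  p (cedge 0) = None -> spoke_flow p s -> val j != 0 -> p (inl j) = None ->
  wins p \/ exists i : 'I_n, [/\ val i != 0, i <> j & p (inl i) <> Some (~~ s)].
Proof.
move=> h0 hs j0 hj.
case: (boolP [forall i : 'I_n, (val i != 0) && (i != j) ==> (p (inl i) == Some (~~ s))]).
  move=> /forallP aligned; left; apply: (wins_to_near_state (s := s) (j := j)) => // i i0 /eqP ij.
  by apply/eqP; move: (aligned i); rewrite i0 ij.
move=> /forallPn [i]; rewrite negb_imply => /andP [/andP [i0 /eqP ij] /eqP hi].
by right; exists i.
Qed.

(** * Even boards *)

Section Even.
Variable m : nat.
Hypothesis n_eq : n = m + m.

Lemma m_ge2 : 2 <= m. Proof. lia. Qed.
Lemma m_lt_n : m < n. Proof. lia. Qed.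

Lemma mirror_cedgem : mirror_edge (cedge m) = cedge m.
Proof. by congr inl; apply: val_inj => /=; have := m_ge2; mod_lia. Qed.

Lemma mirror_fixed_even f : mirror_edge f = f -> f = cedge 0 \/ f = cedge m.
Proof.
have := m_ge2; case: f => [i|[]] //= m2 [/(congr1 val)] /= h.
have [] : val i = 0 %% n \/ val i = m %% n by move: h; mod_lia.
  by move=> /ord_mod_eq ->; left.
by move=> /ord_mod_eq ->; right.
Qed.

Definition cycle_sym (p : position) := forall i : 'I_n, mirror p (inl i) = p (inl i).

Lemma mirror_inl (p : position) i : mirror p (inl i) = p (cedge (n - i)).
Proof. by rewrite /mirror /=; case: (p _). Qed.

Lemma cedgem_legal_reply (p : position) :
  cycle_sym p -> p (cedge m) = None -> no_sink_source p -> exists c, legal p (cedge m) c.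
Proof.
move=> p_sym pm ns; have := m_ge2; have := m_lt_n => m_lt m_ge.
(* continue the arrow on [cedge m.-1], whose mirror image lies on [cedge m.+1] *)
set c := odflt true (p (cedge m.-1)); exists c.
have free_prev : free_or (p (cedge m.-1)) c by rewrite /c; case: (p _) => [x|]; [right | left].
have free_next : free_or (p (cedge m.+1)) c.
  suff -> : p (cedge m.+1) = p (cedge m.-1) by [].
  by rewrite -[RHS]p_sym mirror_inl; congr (p (inl _)); apply: val_inj => /=; mod_lia.
apply: legal_safe => // v /incident_cedge [->|->].
- apply: (@safe_opposite _ _ (cedge m) (cedge m.-1) c c); rewrite ?upd_same.
  + by rewrite /incident /= eqxx.
  + by rewrite /incident /=; mod_lia.
  + by right.
  + by rewrite upd_other //; apply: cedge_neq; mod_lia.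
  + by case: (c) => /=; mod_lia.
- apply: (@safe_opposite _ _ (cedge m) (cedge m.+1) c c); rewrite ?upd_same.
  + by rewrite /incident /=; mod_lia.
  + by rewrite /incident /=; mod_lia.
  + by right.
  + by rewrite upd_other //; apply: cedge_neq; mod_lia.
  + by case: (c) => /=; mod_lia.
Qed.

Lemma ac_reply_legal (p : position) s d : cycle_sym p -> p ab = Some s -> p ac = None ->
  legal p (cedge 0) d -> legal (upd p (cedge 0) d) ac (~~ s).
Proof.
move=> p_sym hab hac hl; have ns := legal_no_sink_source hl.
apply: legal_safe; rewrite ?upd_other // => v /incident_spoke [->|->] /=.
  apply: (@safe_opposite _ _ ab ac s (~~ s)); rewrite ?upd_same //; last by case: (s).
  - by right; rewrite !upd_other.
  - by right.
have [->|/negPf ds] := eqVneq d s.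
  apply: (@safe_opposite _ _ (cedge 0) ac s (~~ s)); rewrite ?upd_same.
  - by rewrite /incident /=; mod_lia.
  - by rewrite /incident /=; mod_lia.
  - by right; rewrite upd_other // upd_same.
  - by right.
  - by case: (s) => /=; mod_lia.
have {ds} d_ns : d = ~~ s by case: (s) (d) ds => -[].
subst d.
case E1: (p (cedge 1)) => [x|]; last first.
  left; exists (cedge 1); first by rewrite /incident /=; mod_lia.
  by rewrite !upd_other //; apply: cedge_neq; mod_lia.
have [xs|/negPf xs] := eqVneq x (~~ s).
  rewrite xs in E1.
  apply: (@safe_opposite _ _ (cedge 0) (cedge 1) (~~ s) (~~ s)); rewrite ?upd_same.
  - by rewrite /incident /=; mod_lia.
  - by rewrite /incident /=; mod_lia.
  - by right; rewrite upd_other // upd_same.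
  - by right; rewrite !upd_other // ?E1 //; apply: cedge_neq; mod_lia.
  - by case: (s) => /=; mod_lia.
(* otherwise its mirror image on [cedge n.-1], [ab] and [bc] all point into or out of [0] *)
have {xs} E1 : p (cedge 1) = Some s by rewrite E1; case: (s) (x) xs => -[].
exfalso; apply: (vertex0_conflict ns); rewrite ?upd_same ?upd_other //; last first.
  by apply: cedge_neq; mod_lia.
by rewrite -E1 -p_sym mirror_inl; congr (p (inl _)); apply: val_inj => /=; mod_lia.
Qed.

Lemma ac_reply_wins (p : position) s d : cycle_sym p -> p (cedge m) <> None ->
  p ab = Some s -> p ac = None -> legal p (cedge 0) d -> wins (upd p (cedge 0) d).
Proof.
move=> p_sym pm hab hac.
case: (eqVneq d s) => [->|ds] hl; have hl' := ac_reply_legal p_sym hab hac hl.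
  apply: (wins_move hl'); left; left; apply/tri_cycleP; exists s.
  by split; rewrite /upd /= ?eqxx.
apply: (wins_by_move hl') => nc; apply: mirror_state_losing; split=> //.
- apply: functional_extensionality => f.
  rewrite !mirror_upd mirror_cedge0 /= /upd; case: f => [i|[]] //=.
  + by case: eqP => // _; exact: p_sym.
  + by rewrite hab negbK.
  + by rewrite /mirror /= hab.
- by move=> f /mirror_fixed_even [->|->]; [rewrite upd_other // upd_same | do 2!apply: upd_marked].
Qed.

Lemma half_state_cedge0 (p : position) s d : cycle_sym p -> p (cedge m) <> None ->
  spoke_flow p s -> legal p (cedge 0) d ->
  ~ has_cycle_cell (upd p (cedge 0) d) /\ wins (upd p (cedge 0) d).
Proof.
move=> p_sym pm hs hl; split; first exact: spoke_flow_no_cycle (spoke_flow_upd_cedge _ _ hs).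
case: hs => -[hab hac]; first exact: ac_reply_wins hab hac hl.
(* reflect the board, which exchanges the two spokes *)
rewrite -[upd p _ _]mirrorK mirror_upd mirror_cedge0; apply: wins_mirror.
apply: (@ac_reply_wins _ s).
- by rewrite /cycle_sym => i; rewrite mirrorK p_sym.
- by rewrite p_sym.
- by rewrite /mirror /= hac /= negbK.
- by rewrite /mirror /= hab.
- by have := legal_mirror hl; rewrite mirror_cedge0.
Qed.

(* Reached after Player 1 marks a spoke and Player 2 answers with [cedge m]. *)
Definition half_state (p : position) s :=
  [/\ cycle_sym p, p (cedge 0) = None, p (cedge m) <> None, spoke_flow p s
    & exists2 i : 'I_n, val i != 0 & p (inl i) <> Some (~~ s)].

Lemma cedge_moved (i : 'I_n) : val i != 0 -> val i != m -> mirror_edge (inl i) <> inl i.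
Proof. by move=> i0 im /mirror_fixed_even [] [/(congr1 val)] /=; have := m_lt_n; mod_lia. Qed.

Lemma half_state_mirror_reply (p : position) s i d :
  half_state p s -> legal p (inl i) d -> val i != 0 -> val i != m ->
  let q := upd p (inl i) d in
  legal q (mirror_edge (inl i)) d /\ cycle_sym (upd q (mirror_edge (inl i)) d).
Proof.
move=> [p_sym h0 _ _ _] hl i0 im q; have i_moved := cedge_moved i0 im.
have r_sym : cycle_sym (upd q (mirror_edge (inl i)) d).
  by move=> j; exact: (@mirror_reply_sym_at p (inl i) d (inl j) i_moved (p_sym j)).
split=> //; apply: legal_local.
- by rewrite /q upd_other //= -mirror_inl p_sym (proj1 hl).
- exact: legal_no_sink_source hl.
move=> [j _|//].
case: (ltnP 1 j) => j_ge2.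
  apply: (mirror_reply_no_sink_source_at (legal_no_sink_source hl) i_moved) => f.
  by move=> /(incident_ge2 j_ge2) [->|->]; apply: r_sym.
(* vertices [0] and [1] keep the free edge [cedge 0] *)
apply: safe_no_sink_source; left; exists (cedge 0).
  by rewrite /incident /=; mod_lia.
rewrite /q !upd_other //; apply: cedge_neq; mod_lia.
Qed.

Lemma half_state_spoke (p : position) s b d : half_state p s -> legal p (inr b) d ->
  ~ has_cycle_cell (upd p (inr b) d) /\ wins (upd p (inr b) d).
Proof.
move=> [_ h0 _ hs [w w0 hw]] hl; have [hab hac] := spoke_move_flow hs hl.
split.
  case=> [/tri_cycleP [x [hx0 _ _]]|/big_cycleP [x [hx hxb _]]].
    by move: hx0; rewrite upd_other // h0.
  move: hxb; rewrite hab => -[sx]; apply: hw.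
  by rewrite -(@upd_other p (inr b) d (inl w)) // hx // sx negbK.
have hl' : legal (upd p (inr b) d) (cedge 0) s.
  by apply: triangle_reply_legal (legal_no_sink_source hl) _ hab hac; rewrite upd_other.
apply: (wins_move hl'); left; left; apply/tri_cycleP; exists s.
by rewrite upd_same; split; rewrite // upd_other.
Qed.

Lemma half_state_losing (p : position) s : half_state p s -> losing p.
Proof.
have [k] := ubnP (free_edges p); elim: k p => // k IH p lt_pk hp e d /[dup] hl [pe _].
case: (hp) => p_sym h0 hm hs _.
case: e hl pe => [i|b] hl pe; last exact: half_state_spoke hp hl.
case: (eqVneq (val i) 0) => i0.
  have ei : i = ord_mod 0 by apply: ord_mod_eq; rewrite mod0n.
  by subst i; exact: half_state_cedge0 p_sym hm hs hl.
have im : val i != m.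
  apply: contra_not_neq hm => im; rewrite -pe; congr (p (inl _)).
  by symmetry; apply: ord_mod_eq; mod_lia.
split; first exact: spoke_flow_no_cycle (spoke_flow_upd_cedge _ _ hs).
have [hl' r_sym] := half_state_mirror_reply hp hl i0 im.
have i'0 : val (ord_mod (n - i)) != 0 by mod_lia.
case: (@wins_near_or_misaligned _ s _ _ _ i'0 (proj1 hl')) => //.
  by rewrite upd_other // => /esym; apply: cedge0_neq.
move=> [w [w0 wi' hw]]; apply: (wins_by_move hl') => nc_r; apply: IH.
  by have := free_edges_upd d pe; have := free_edges_upd d (proj1 hl'); lia.
split=> //.
- by rewrite !upd_other // => /esym; apply: cedge0_neq.
- by do 2 apply: upd_marked.
- by exists w; rewrite // upd_other // => -[].
Qed.

Definition open_state (p : position) :=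
  [/\ mirror p = p, p (cedge 0) = None, p (cedge m) = None, p ab = None & p ac = None].

Lemma cedge_m0 : cedge m <> cedge 0.
Proof. by apply: cedge_neq; have := m_ge2; mod_lia. Qed.

Lemma mirror_state_fixed_marked (p : position) :
  p (cedge 0) <> None -> p (cedge m) <> None -> forall f, mirror_edge f = f -> p f <> None.
Proof. by move=> h0 hm f /mirror_fixed_even [->|->]. Qed.

Lemma open_state_cedge0 (p : position) d :
  open_state p -> legal p (cedge 0) d -> wins (upd p (cedge 0) d).
Proof.
move=> [p_sym _ hm _ _] hl.
have q_sym : mirror (upd p (cedge 0) d) = upd p (cedge 0) d.
  by rewrite mirror_upd mirror_cedge0 p_sym.
have [c hc] : exists c, legal (upd p (cedge 0) d) (cedge m) c.
  apply: (cedgem_legal_reply _ _ (legal_no_sink_source hl)).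
    by move=> j; rewrite q_sym.
  by rewrite upd_other //; exact: cedge_m0.
apply: (wins_by_move hc) => nc; apply: mirror_state_losing; split=> //.
  by rewrite mirror_upd mirror_cedgem q_sym.
by apply: mirror_state_fixed_marked; rewrite ?upd_same // upd_other ?upd_same // => /esym /cedge_m0.
Qed.

Lemma open_state_cedgem (p : position) d :
  open_state p -> legal p (cedge m) d -> wins (upd p (cedge m) d).
Proof.
move=> [p_sym h0 _ hab hac] hl.
have hc : legal (upd p (cedge m) d) (cedge 0) true.
  apply: legal_safe; first by rewrite upd_other // => /esym /cedge_m0.
    exact: legal_no_sink_source hl.
  move=> v /incident_cedge [->|->]; left.
  - by exists ab; rewrite ?upd_other // /incident /=; mod_lia.
  - by exists ac; rewrite ?upd_other // /incident /=; mod_lia.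
apply: (wins_by_move hc) => nc; apply: mirror_state_losing; split=> //.
  by rewrite !mirror_upd mirror_cedgem mirror_cedge0 p_sym.
by apply: mirror_state_fixed_marked; rewrite ?upd_same // upd_other ?upd_same //; exact: cedge_m0.
Qed.

(* Player 2 either puts the big cell one move from a cycle, or marks [cedge m]. *)
Lemma open_state_spoke (p : position) b d :
  open_state p -> legal p (inr b) d -> wins (upd p (inr b) d).
Proof.
move=> [p_sym h0 hm hab hac] hl; have ns := legal_no_sink_source hl.
have hs : spoke_flow (upd p (inr b) d) (if b then d else ~~ d).
  rewrite /spoke_flow; case: b {hl ns} => /=.
  - by rewrite upd_same upd_other //; left.
  - by rewrite upd_same upd_other ?negbK //; right.
move: hs; set s := if b then d else ~~ d; set q := upd p (inr b) d => hs.
have q_sym : cycle_sym q by move=> j; rewrite /q mirror_upd !upd_other // p_sym.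
have m0 : val (ord_mod m) != 0 by have := m_ge2; mod_lia.
case: (@wins_near_or_misaligned q s (ord_mod m)) => //; rewrite ?upd_other //.
move=> [w [w0 wm hw]].
have [c hc] : exists c, legal q (cedge m) c.
  by apply: (cedgem_legal_reply q_sym _ ns); rewrite /q upd_other.
apply: (wins_by_move hc) => nc; apply: (@half_state_losing _ s); split.
- rewrite /cycle_sym => j; rewrite mirror_upd mirror_cedgem /upd.
  by case: eqP => // _; exact: q_sym.
- by rewrite upd_other; [rewrite /q upd_other | move=> /esym /cedge_m0].
- by rewrite upd_same.
- exact: spoke_flow_upd_cedge.
- by exists w; rewrite // upd_other // => -[].
Qed.

Lemma open_state_losing (p : position) : open_state p -> losing p.
Proof.
have [k] := ubnP (free_edges p); elim: k p => // k IH p lt_pk /[dup] hp.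
move=> [p_sym h0 hm hab hac] e d /[dup] hl [pe _].
split.
  apply: no_cycle_free_spoke.
  by case: e {hl pe} => [i|[]]; [left | right | left]; rewrite upd_other.
case: e hl pe => [i|b] hl pe; last exact: open_state_spoke hp hl.
case: (eqVneq (val i) 0) => i0.
  have ei : i = ord_mod 0 by apply: ord_mod_eq; rewrite mod0n.
  by subst i; exact: open_state_cedge0 hp hl.
case: (eqVneq (val i) m) => im.
  have ei : i = ord_mod m by apply: ord_mod_eq; rewrite modn_small // m_lt_n.
  by subst i; exact: open_state_cedgem hp hl.
have [hc r_sym] := mirror_reply p_sym hl (cedge_moved i0 im).
apply: (wins_by_move hc) => nc; apply: IH.
  by have := free_edges_upd d pe; have := free_edges_upd (mirror_dir (inl i) d) (proj1 hc); lia.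
have i'0 : val (ord_mod (n - i)) != 0 by mod_lia.
have i'm : val (ord_mod (n - i)) != m by have := m_lt_n; mod_lia.
split=> //; rewrite !upd_other //; apply: cedge_neq; mod_lia.
Qed.

End Even.

Theorem even_player2_wins : ~~ odd n -> player2_wins n.
Proof.
move=> n_even; have n_eq : n = n./2 + n./2.
  by have := odd_double_half n; rewrite (negbTE n_even) add0n -addnn.
by apply: (open_state_losing n_eq); split=> //; exact: mirror_empty.
Qed.

End Board.

Theorem theorem4p5 (n : nat) (hn : 3 <= n) :
  (odd n -> player1_wins n) /\ (~~ odd n -> player2_wins n).
Proof. split; [exact: odd_player1_wins | exact: even_player2_wins]. Qed.
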